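(* Let $A$ be a metric space and let $a:\mathbb{R}^N\times A\to S^N$, $b:\mathbb{R}^N\times A\to\mathbb{R}^N$, $c:\mathbb{R}^N\times A\to\mathbb{R}$ be continuous. For $\alpha\in A$ set $L^\alpha u:=\mathrm{tr}(a(x,\alpha)D^2u)+b(x,\alpha)\cdot Du$ and $G[u]:=\inf_{\alpha\in A}\{-L^\alpha u+c(x,\alpha)u\}$. Assume: (i) $F(x,t,p,X)=\inf_{\alpha\in A}\{-\mathrm{tr}(a(x,\alpha)X)-b(x,\alpha)\cdot p+c(x,\alpha)t\}$ is continuous on $\mathbb{R}^N\times\mathbb{R}\times\mathbb{R}^N\times S^N$, $c\ge 0$, and $G$ satisfies the Comparison Principle in every bounded open set $\Omega$: if $u,v$ are respectively a viscosity subsolution and supersolution of $G[u]=0$ in $\Omega$ with $u\le v$ on $\partial\Omega$, then $u\le v$ in $\Omega$; (ii) $G$ satisfies the Strong Maximum Principle: any viscosity subsolution of $G[u]=0$ in $\mathbb{R}^N$ that attains an interior nonnegative maximum is constant; (iii) there exist $R_o\ge0$ and a lower semicontinuous $w:\mathbb{R}^N\to\mathbb{R}$ such that $G[w]\ge0$ in the viscosity sense in $\{|x|>R_o\}$ and $\lim_{|x|\to\infty}w(x)=+\infty$. Let $u\in USC(\mathbb{R}^N)$ satisfy $G[u]\le0$ in $\mathbb{R}^N$ in the viscosity sense and $\limsup_{|x|\to\infty}\frac{u(x)}{w(x)}\le 0$. If either $u\ge0$ or $c(x,\alpha)=0$ for all $x,\alpha$, then $u$ is constant.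
   Context: $S^N$ denotes the space of real symmetric $N\times N$ matrices. Sub- and supersolutions are meant in the viscosity sense. *)

From HB Require Import structures.
From mathcomp Require Import all_boot all_order all_algebra.
From mathcomp Require Import all_classical all_reals topology normedtype.
Set Implicit Arguments. Unset Strict Implicit. Unset Printing Implicit Defensive.
Import Order.TTheory GRing.Theory Num.Theory.
Import numFieldNormedType.Exports.
Local Open Scope classical_set_scope.
Local Open Scope ring_scope.

Section Defs.
Variables (R : realType) (N : nat).
Notation V := 'rV[R]_N.

Definition dotv (p q : V) : R := \sum_(i < N) p 0 i * q 0 i.
Definition enorm (x : V) : R := Num.sqrt (dotv x x).

Definition symm (X : 'M[R]_N) : Prop := X^T = X.

Definition usc_on (D : set V) (u : V -> R) : Prop :=
  forall x, D x -> forall e : R, 0 < e ->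
    exists2 d : R, 0 < d & forall y, D y -> enorm (y - x) < d -> u y < u x + e.
Definition lsc_on (D : set V) (u : V -> R) : Prop :=
  forall x, D x -> forall e : R, 0 < e ->
    exists2 d : R, 0 < d & forall y, D y -> enorm (y - x) < d -> u x - e < u y.

Definition has_grad (f : V -> R) (p : V) (x : V) : Prop :=
  forall e : R, 0 < e -> exists2 d : R, 0 < d & forall y, enorm (y - x) < d ->
    `| f y - f x - dotv p (y - x) | <= e * enorm (y - x).
Definition has_jac (g : V -> V) (J : 'M[R]_N) (x : V) : Prop :=
  forall e : R, 0 < e -> exists2 d : R, 0 < d & forall y, enorm (y - x) < d ->
    enorm (g y - g x - (y - x) *m J) <= e * enorm (y - x).

Definition is_C2 (phi : V -> R) (Dphi : V -> V) (D2phi : V -> 'M[R]_N) : Prop :=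
  (forall x, has_grad phi (Dphi x) x) /\ (forall x, has_jac Dphi (D2phi x) x) /\
  continuous D2phi.

Definition Fset (A : Type) (a : V -> A -> 'M[R]_N) (b : V -> A -> V)
  (c : V -> A -> R) (x : V) (t : R) (p : V) (X : 'M[R]_N) : set R :=
  [set - \tr (a x al *m X) - dotv (b x al) p + c x al * t | al in [set: A]].
Definition Fop (A : Type) a b c x t p X : R := inf (@Fset A a b c x t p X).

Definition visc_sub (F : V -> R -> V -> 'M[R]_N -> R) (Om : set V) (u : V -> R)
  : Prop :=
  usc_on Om u /\
  forall phi Dphi D2phi x0, is_C2 phi Dphi D2phi -> Om x0 ->
    (exists2 r : R, 0 < r & forall y, enorm (y - x0) < r ->
        u y - phi y <= u x0 - phi x0) ->
    F x0 (u x0) (Dphi x0) (D2phi x0) <= 0.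
Definition visc_super (F : V -> R -> V -> 'M[R]_N -> R) (Om : set V) (v : V -> R)
  : Prop :=
  lsc_on Om v /\
  forall phi Dphi D2phi x0, is_C2 phi Dphi D2phi -> Om x0 ->
    (exists2 r : R, 0 < r & forall y, enorm (y - x0) < r ->
        v x0 - phi x0 <= v y - phi y) ->
    0 <= F x0 (v x0) (Dphi x0) (D2phi x0).

Definition bounded_set (Om : set V) : Prop :=
  exists M : R, forall x, Om x -> enorm x <= M.

Definition comparison_principle (F : V -> R -> V -> 'M[R]_N -> R) : Prop :=
  forall Om : set V, open Om -> bounded_set Om ->
  forall u v : V -> R, usc_on (closure Om) u -> lsc_on (closure Om) v ->
    visc_sub F Om u -> visc_super F Om v ->
    (forall x, (closure Om `\` Om) x -> u x <= v x) ->
    forall x, Om x -> u x <= v x.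

Definition strong_max_principle (F : V -> R -> V -> 'M[R]_N -> R) : Prop :=
  forall u : V -> R, visc_sub F [set: V] u ->
  forall x0, (forall x, u x <= u x0) -> 0 <= u x0 -> forall x, u x = u x0.

End Defs.

From HB Require Import structures.
From mathcomp Require Import all_boot all_order all_algebra.
From mathcomp Require Import all_classical all_reals topology normedtype.
From mathcomp Require Import realfun finmap ring lra.
Import Order.TTheory GRing.Theory Num.Theory.
Import numFieldNormedType.Exports.
Local Open Scope classical_set_scope.
Local Open Scope ring_scope.

(* Choose R1 >= Ro beyond which w > 0 and let m be the maximum of the upper
   semicontinuous u on the closed ball of radius R1. For eps > 0, eps w + m is
   a supersolution outside that ball (G is positively homogeneous, and c m >= 0
   in both cases of the alternative); it dominates u on the sphere of radius R1
   and, since limsup u / w <= 0, on every large sphere. The comparison principle on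
   annuli gives u <= eps w + m, and letting eps -> 0, u <= m everywhere. Thus
   u attains an interior maximum, and the strong maximum principle, applied to
   u or, when c = 0, to u - m, shows that u is constant. *)

Set Implicit Arguments.
Unset Strict Implicit.

Lemma continuous_sum (T : topologicalType) (K : numFieldType) (I : Type)
    (r : seq I) (F : I -> T -> K) :
  (forall i, continuous (F i)) -> continuous (fun y => \sum_(i <- r) F i y).
Proof.
move=> cF; elim: r => [|j r IH].
  under eq_fun do rewrite big_nil; exact: cst_continuous.
under eq_fun do rewrite big_cons.
by move=> x; apply: continuousD; [exact: cF|exact: IH].
Qed.

Section EuclideanNorm.
Variables (R : realType) (N : nat).
Local Notation V := 'rV[R]_N.

Lemma dotv_ge0 (x : V) : 0 <= dotv x x.
Proof. by apply: sumr_ge0 => i _; rewrite -expr2 sqr_ge0. Qed.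

Lemma enorm_ge0 (x : V) : 0 <= enorm x.
Proof. exact: sqrtr_ge0. Qed.

Lemma dotvZl k (p q : V) : dotv (k *: p) q = k * dotv p q.
Proof. by rewrite /dotv mulr_sumr; apply: eq_bigr => i _; rewrite mxE mulrA. Qed.

Lemma dotvZr k (p q : V) : dotv p (k *: q) = k * dotv p q.
Proof.
rewrite /dotv mulr_sumr; apply: eq_bigr => i _.
by rewrite mxE mulrCA.
Qed.

Lemma enormZ k (x : V) : enorm (k *: x) = `|k| * enorm x.
Proof.
by rewrite /enorm dotvZl dotvZr mulrA -expr2 sqrtrM ?sqr_ge0 // sqrtr_sqr.
Qed.

Lemma enorm0 : enorm (0 : V) = 0.
Proof. by rewrite -(scale0r (0 : V)) enormZ normr0 mul0r. Qed.

Lemma coord_le_enorm (x : V) i : `|x 0 i| <= enorm x.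
Proof.
rewrite /enorm -sqrtr_sqr ler_sqrt ?dotv_ge0 //.
rewrite /dotv (bigD1 i) //= -expr2 lerDl; apply: sumr_ge0 => j _.
by rewrite -expr2 sqr_ge0.
Qed.

Lemma continuous_enorm : continuous (@enorm R N).
Proof.
have cdot : continuous (fun x : V => dotv x x).
  by apply: continuous_sum => i x; apply: continuousM; exact: coord_continuous.
by move=> x; apply: continuous_comp (cdot x) _; exact: sqrt_continuous.
Qed.

Lemma open_enorm_preimage (P : set R) : open P -> open (@enorm R N @^-1` P).
Proof. exact: (proj1 (continuousP _) continuous_enorm). Qed.

Lemma closed_enorm_preimage (P : set R) : closed P -> closed (@enorm R N @^-1` P).
Proof. exact: (proj1 (continuous_closedP _) continuous_enorm). Qed.

Lemma nbhs_enorm_lt (x : V) d : 0 < d -> nbhs x [set y | enorm (y - x) < d].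
Proof.
move=> d0; apply: open_nbhs_nbhs; split; last by rewrite /= subrr enorm0.
have cshift : continuous (fun y : V => y - x).
  by move=> y; apply: continuousB; [exact: cvg_id|exact: cst_continuous].
exact: (proj1 (continuousP _) cshift _ (open_enorm_preimage (@open_lt R d))).
Qed.

Lemma compact_enorm_le r : compact [set x : V | enorm x <= r].
Proof.
apply: (subclosed_compact (closed_enorm_preimage (@closed_le R r))
  (@rV_compact _ N (fun _ => `[-r, r]%classic) _)).
  by move=> _; exact: segment_compact.
move=> x /= hx i; rewrite /= in_itv /= -ler_norml.
exact: le_trans (coord_le_enorm x i) hx.
Qed.

Definition annulus (r1 r2 : R) := [set x : V | r1 < enorm x /\ enorm x < r2].

Lemma open_annulus r1 r2 : open (annulus r1 r2).
Proof.
have -> : annulus r1 r2 =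
    (@enorm R N @^-1` [set z | r1 < z]) `&` (@enorm R N @^-1` [set z | z < r2]).
  by apply/seteqP; split.
by apply: openI; apply: open_enorm_preimage; [exact: open_gt|exact: open_lt].
Qed.

Lemma closure_annulus r1 r2 :
  closure (annulus r1 r2) `<=` [set x | r1 <= enorm x /\ enorm x <= r2].
Proof.
set C := [set x : V | r1 <= enorm x /\ enorm x <= r2].
have clC : closed C.
  have -> : C = (@enorm R N @^-1` [set z | r1 <= z]) `&`
                (@enorm R N @^-1` [set z | z <= r2]) by apply/seteqP; split.
  by apply: closedI; apply: closed_enorm_preimage;
    [exact: closed_ge|exact: closed_le].
rewrite (closure_id C).1 //; apply: closureS => x [? ?]; split; exact: ltW.
Qed.

End EuclideanNorm.

Arguments compact_enorm_le {R N} r.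
Arguments open_annulus {R N} r1 r2.

Section Semicontinuity.
Variables (R : realType) (N : nat).
Local Notation V := 'rV[R]_N.

Lemma usc_on_subset (D D' : set V) u : D' `<=` D -> usc_on D u -> usc_on D' u.
Proof.
move=> sD hu x Dx e e0; have [d d0 hd] := hu x (sD _ Dx) e e0.
by exists d => // y /sD; apply: hd.
Qed.

Lemma lsc_on_subset (D D' : set V) u : D' `<=` D -> lsc_on D u -> lsc_on D' u.
Proof.
move=> sD hu x Dx e e0; have [d d0 hd] := hu x (sD _ Dx) e e0.
by exists d => // y /sD; apply: hd.
Qed.

Lemma lsc_on_scale_add (D : set V) w eps m : 0 < eps -> lsc_on D w ->
  lsc_on D (fun x => eps * w x + m).
Proof.
move=> e0 wl x Dx e ep; have [d d0 hd] := wl x Dx (e / eps) (divr_gt0 ep e0).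
exists d => // y Dy /(hd y Dy) lt.
have -> : eps * w x + m - e = eps * (w x - e / eps) + m by field; rewrite gt_eqF.
by rewrite ltrD2r ltr_pM2l.
Qed.

Lemma open_usc_lt (u : V -> R) t : usc_on setT u -> open [set y | u y < t].
Proof.
move=> hu; rewrite openE => x /= hx.
have [d d0 hd] := hu x I (t - u x) (ltac:(by rewrite subr_gt0)).
apply: filterS (nbhs_enorm_lt x d0) => y /(hd y I).
by rewrite addrC subrK.
Qed.

Lemma usc_attains_max (K : set V) (u : V -> R) : compact K -> K !=set0 ->
  usc_on setT u -> exists2 x0, K x0 & forall x, K x -> u x <= u x0.
Proof.
move=> cK [x1 Kx1] hu; apply: contrapT => nomax.
have above x : K x -> exists2 y, K y & u x < u y.
  move=> Kx; apply: contrapT => h; apply: nomax; exists x => // y Ky.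
  by rewrite leNgt; apply/negP => lt; apply: h; exists y.
move: cK; rewrite compact_cover => /(_ V K (fun y => [set z | u z < u y])).
case=> [y _|x Kx|D sDK cover]; first exact: open_usc_lt.
  by have [y Ky lt] := above x Kx; exists y.
have [y0 Dy0 _] := cover x1 Kx1.
case: (arg_maxP (fun y : D => u (val y)) (P := predT) (i0 := [` Dy0]%fset) isT)
  => y _ ymax.
have [z Dz] := cover (val y) (set_mem (sDK _ (fsvalP y))).
by rewrite /= ltNge; apply/negP/negPn; exact: (ymax [` Dz]%fset).
Qed.

End Semicontinuity.

Section Viscosity.
Variables (R : realType) (N : nat).
Local Notation V := 'rV[R]_N.

Lemma is_C2_affine (phi : V -> R) Dphi D2phi k m :
  is_C2 phi Dphi D2phi ->
  is_C2 (fun y => k * phi y + m) (fun y => k *: Dphi y) (fun y => k *: D2phi y).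
Proof.
move=> [hg [hj hc]].
have k1 : 0 < `|k| + 1 by have := normr_ge0 k; lra.
have scale_err e t : 0 < e -> 0 <= t -> `|k| * (e / (`|k| + 1) * t) <= e * t.
  move=> e0 t0; rewrite mulrA ler_wpM2r // mulrA ler_pdivrMr //.
  by have := normr_ge0 k; nra.
split; [|split].
- move=> x e e0; have [d d0 hd] := hg x _ (divr_gt0 e0 k1); exists d => // y hy.
  have -> : k * phi y + m - (k * phi x + m) - dotv (k *: Dphi x) (y - x)
     = k * (phi y - phi x - dotv (Dphi x) (y - x)) by rewrite dotvZl; ring.
  rewrite normrM; apply: le_trans (scale_err _ _ e0 (enorm_ge0 _)).
  by rewrite ler_wpM2l ?normr_ge0 // hd.
- move=> x e e0; have [d d0 hd] := hj x _ (divr_gt0 e0 k1); exists d => // y hy.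
  rewrite -scalemxAr -!scalerBr enormZ.
  apply: le_trans (scale_err _ _ e0 (enorm_ge0 _)).
  by rewrite ler_wpM2l ?normr_ge0 // hd.
- by move=> x; apply: continuousZ; [exact: cst_continuous|exact: hc].
Qed.

Lemma visc_sub_subset F (D Om : set V) u : Om `<=` D ->
  visc_sub F D u -> visc_sub F Om u.
Proof.
move=> sOD [ul ut]; split; first exact: usc_on_subset ul.
by move=> phi Dphi D2phi x0 hC /sOD; apply: ut.
Qed.

Lemma visc_super_subset F (D Om : set V) w : Om `<=` D ->
  visc_super F D w -> visc_super F Om w.
Proof.
move=> sOD [wl wt]; split; first exact: lsc_on_subset wl.
by move=> phi Dphi D2phi x0 hC /sOD; apply: wt.
Qed.

Definition symmetrize (X : 'M[R]_N) := 2^-1 *: (X + X^T).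

Lemma symm_symmetrize X : symm (symmetrize X).
Proof. by rewrite /symm linearZ /= linearD /= trmxK addrC. Qed.

Lemma mxtrace_mul_symmetrize (S X : 'M[R]_N) : symm S ->
  \tr (S *m symmetrize X) = \tr (S *m X).
Proof.
move=> sS; have trT : \tr (S *m X^T) = \tr (S *m X).
  by rewrite -mxtrace_tr trmx_mul trmxK sS mxtrace_mulC.
by rewrite -scalemxAr mxtraceZ mulmxDr mxtraceD trT; field.
Qed.

Section Hamiltonian.
Variables (A : Type) (a : V -> A -> 'M[R]_N) (b : V -> A -> V) (c : V -> A -> R).
Hypothesis a_symm : forall x al, symm (a x al).
Hypothesis has_inf_Fset_symm :
  forall x t p X, symm X -> has_inf (Fset a b c x t p X).

Lemma has_inf_Fset x t p X : has_inf (Fset a b c x t p X).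
Proof.
have -> : Fset a b c x t p X = Fset a b c x t p (symmetrize X).
  by apply/seteqP; split => _ [al _ <-]; exists al; rewrite ?mxtrace_mul_symmetrize.
exact/has_inf_Fset_symm/symm_symmetrize.
Qed.

Lemma visc_super_scale_add (Om : set V) w eps m : 0 < eps ->
  (forall x al, 0 <= c x al * m) ->
  visc_super (Fop a b c) Om w ->
  visc_super (Fop a b c) Om (fun x => eps * w x + m).
Proof.
move=> e0 hcm [wl wt]; have ei : 0 < eps^-1 by rewrite invr_gt0.
split; first exact: lsc_on_scale_add.
move=> phi Dphi D2phi x0 hC Ox [r r0 hr].
have Fw : 0 <= Fop a b c x0 (w x0) (eps^-1 *: Dphi x0) (eps^-1 *: D2phi x0).
  apply: wt (is_C2_affine (eps^-1) (- (eps^-1 * m)) hC) Ox _.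
  exists r => // y /hr le; rewrite -[_ <= _](ler_pM2l ei) in le.
  by move: le; rewrite !mulrBr !mulrDr !mulrA mulVf ?gt_eqF // !mul1r; lra.
apply: lb_le_inf; first by have [[z hz] _] := has_inf_Fset x0 (eps * w x0 + m)
  (Dphi x0) (D2phi x0); exists z.
move=> _ [al _ <-].
have := le_trans Fw (ge_inf (has_inf_Fset _ _ _ _).2 (ex_intro2 _ _ al I erefl)).
rewrite -scalemxAr mxtraceZ dotvZr => Fal.
set T := \tr _ in Fal *; set B := dotv _ _ in Fal *.
have -> : - T - B + c x0 al * (eps * w x0 + m) =
  eps * (- (eps^-1 * T) - eps^-1 * B + c x0 al * w x0) + c x0 al * m.
  by field; rewrite gt_eqF.
by rewrite addr_ge0 // mulr_ge0 // ltW.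
Qed.

Lemma visc_sub_add_const (u : V -> R) k : (forall x al, c x al = 0) ->
  visc_sub (Fop a b c) setT u -> visc_sub (Fop a b c) setT (fun x => u x + k).
Proof.
move=> c0 [ul ut]; split.
  move=> x _ e e0; have [d d0 hd] := ul x I e e0.
  by exists d => // y _ /(hd y I); lra.
move=> phi Dphi D2phi x0 hC _ [r r0 hr].
have Fset_t x t t' p X : Fset a b c x t p X = Fset a b c x t' p X.
  by apply/seteqP; split => _ [al _ <-]; exists al; rewrite // !c0 !mul0r.
rewrite /Fop (Fset_t _ _ (u x0)).
have := ut _ _ _ x0 (is_C2_affine 1 (- k) hC) I; rewrite !scale1r; apply.
by exists r => // y /hr; rewrite !mul1r; lra.
Qed.

End Hamiltonian.
End Viscosity.

Section Liouville.
Variables (R : realType) (N : nat).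
Local Notation V := 'rV[R]_N.

Lemma comparison_on_annulus F (r1 r2 : R) (u v : V -> R) :
  comparison_principle F -> usc_on setT u -> lsc_on setT v ->
  visc_sub F setT u -> visc_super F (annulus r1 r2) v ->
  (forall y, enorm y = r1 \/ enorm y = r2 -> u y <= v y) ->
  forall x, annulus r1 r2 x -> u x <= v x.
Proof.
move=> CP ul vl us vs bd; apply: (CP _ (open_annulus r1 r2)) => //.
- by exists r2 => y [_ /ltW].
- exact: usc_on_subset ul.
- exact: lsc_on_subset vl.
- exact: visc_sub_subset us.
move=> y [/closure_annulus [le1 le2] notin]; apply: bd.
by case: (ltP r1 (enorm y)) => [lt1|ge1]; [right|left]; apply/eqP;
  rewrite eq_le ?le2 ?le1 ?ge1 //= leNgt; apply/negP => lt2; apply: notin.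
Qed.

Variables (u w : V -> R).
Hypothesis w_unbounded :
  forall M : R, exists Rm : R, forall x, Rm < enorm x -> M < w x.
Hypothesis u_over_w_limsup : forall e : R, 0 < e ->
  exists Rm : R, forall x, Rm < enorm x -> u x / w x <= e.

Lemma eventually_le_scale_add eps m : 0 < eps ->
  exists Rr, forall y, Rr < enorm y -> u y <= eps * w y + m.
Proof.
move=> e0; have [Ru hRu] := u_over_w_limsup (divr_gt0 e0 (ltr0n _ 2)).
have [Rw hRw] := w_unbounded (2 * `|m| / eps).
exists (Num.max Ru Rw) => y; rewrite gt_max => /andP[/hRu uw /hRw wy].
have w0 : 0 < w y by apply: le_lt_trans wy; rewrite divr_ge0 ?mulr_ge0 // ltW.
rewrite ler_pdivrMr // in uw; rewrite ltr_pdivrMr // in wy.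
have := ler_norm (- m); rewrite normrN; nra.
Qed.

Variables (A : Type) (a : V -> A -> 'M[R]_N) (b : V -> A -> V) (c : V -> A -> R).
Variable Ro : R.
Hypothesis a_symm : forall x al, symm (a x al).
Hypothesis has_inf_Fset_symm :
  forall x t p X, symm X -> has_inf (Fset a b c x t p X).
Hypothesis CP : comparison_principle (Fop a b c).
Hypothesis w_lsc : lsc_on setT w.
Hypothesis w_super : visc_super (Fop a b c) [set x | Ro < enorm x] w.
Hypothesis u_usc : usc_on setT u.
Hypothesis u_sub : visc_sub (Fop a b c) setT u.

Lemma sub_le_max_on_ball (R1 m : R) : Ro <= R1 ->
  (forall y, R1 <= enorm y -> 0 < w y) ->
  (forall y, enorm y <= R1 -> u y <= m) ->
  (forall y al, 0 <= c y al * m) ->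
  forall x, u x <= m.
Proof.
move=> RoR1 wpos ball hcm x; have [|out] := leP (enorm x) R1; first exact: ball.
have wx := wpos x (ltW out); apply/ler_addgt0Pr => e e0.
have ep : 0 < e / w x by rewrite divr_gt0.
have [Rr hRr] := eventually_le_scale_add m ep.
pose r2 := Num.max Rr (enorm x) + 1.
have := comparison_on_annulus (r1 := R1) (r2 := r2) CP u_usc
  (lsc_on_scale_add m ep w_lsc) u_sub _ _ (x := x).
rewrite mulfVK ?gt_eqF // addrC; apply.
- apply: (visc_super_scale_add (w := w) a_symm has_inf_Fset_symm ep hcm).
  by apply: visc_super_subset w_super => y [/= lt _]; lra.
- move=> y [ey|ey].
    have uy : u y <= m by apply: ball; rewrite ey.
    have wy : 0 < w y by apply: wpos; rewrite ey.
    by have := mulr_gt0 ep wy; lra.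
  by apply: hRr; rewrite ey /r2; have := le_max Rr Rr (enorm x); rewrite lexx; lra.
- by split => //; rewrite /r2; have := le_max (enorm x) Rr (enorm x); rewrite lexx orbT; lra.
Qed.

End Liouville.

Unset Implicit Arguments.
Set Strict Implicit.

Theorem theorem2p1 (R : realType) (N : nat) (A : pseudoMetricType R)
  (a : 'rV[R]_N -> A -> 'M[R]_N) (b : 'rV[R]_N -> A -> 'rV[R]_N)
  (c : 'rV[R]_N -> A -> R) (Ro : R) (w : 'rV[R]_N -> R)
  (u : 'rV[R]_N -> R) :
  hausdorff_space A ->
  (forall x al, symm (a x al)) ->
  continuous (fun z : 'rV[R]_N * A => a z.1 z.2) ->
  continuous (fun z : 'rV[R]_N * A => b z.1 z.2) ->
  continuous (fun z : 'rV[R]_N * A => c z.1 z.2) ->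
  (* (i) *)
  (forall x t p X, symm X -> has_inf (Fset a b c x t p X)) ->
  {within [set z : 'rV[R]_N * R * 'rV[R]_N * 'M[R]_N | symm z.2],
     continuous (fun z : 'rV[R]_N * R * 'rV[R]_N * 'M[R]_N =>
                   Fop a b c z.1.1.1 z.1.1.2 z.1.2 z.2)} ->
  (forall x al, 0 <= c x al) ->
  comparison_principle (Fop a b c) ->
  (* (ii) *)
  strong_max_principle (Fop a b c) ->
  (* (iii) *)
  0 <= Ro ->
  lsc_on [set: 'rV[R]_N] w ->
  visc_super (Fop a b c) [set x | Ro < enorm x] w ->
  (forall M : R, exists Rm : R, forall x, Rm < enorm x -> M < w x) ->
  (* hypotheses on u *)
  usc_on [set: 'rV[R]_N] u ->
  visc_sub (Fop a b c) [set: 'rV[R]_N] u ->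
  (forall e : R, 0 < e -> exists Rm : R, forall x, Rm < enorm x ->
       u x / w x <= e) ->
  (forall x, 0 <= u x) \/ (forall x al, c x al = 0) ->
  exists k : R, forall x, u x = k.
Proof.
move=> _ asym _ _ _ hinf _ c_ge0 CP SMP Ro0 wl ws winf ul us ulim hcase.
have [Rw hRw] := winf 0.
pose R1 := Num.max Ro Rw + 1.
have [RoR1 RwR1] : Ro < R1 /\ Rw < R1.
  have := le_max Ro Ro Rw; have := le_max Rw Ro Rw.
  by rewrite /R1 !lexx orbT /=; lra.
have wpos y : R1 <= enorm y -> 0 < w y by move=> le; apply: hRw; lra.
have [|x0 _ ball] := usc_attains_max (compact_enorm_le R1) _ ul.
  by exists 0; rewrite /= enorm0; lra.
have hcm y al : 0 <= c y al * u x0.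
  by case: hcase => [u0|c0]; [exact: mulr_ge0|rewrite c0 mul0r].
have umax := sub_le_max_on_ball winf ulim asym hinf CP wl ws ul us
  (ltW RoR1) wpos ball hcm.
exists (u x0); case: hcase => [u0 x|c0 x]; first exact: SMP us x0 umax (u0 x0) x.
have shifted := SMP _ (visc_sub_add_const (- u x0) c0 us) x0.
by apply/eqP; rewrite -subr_eq0 shifted /= ?subrr // => y; rewrite subr_le0.
Qed.
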